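(* Let $X$ be a $T_1$ topological space. Then $T''(X)$ is a ring under pointwise addition and multiplication.
   Context: For a topological space $X$, $C(X)$ denotes the set of real-valued continuous functions on $X$. A cozero set in $X$ is a set of the form $coz(g)=\{x\in X: g(x)\neq 0\}$ with $g\in C(X)$. $T''(X)$ denotes the set of all functions $f\colon X\to\mathbb{R}$ for which there is a dense cozero set $U$ of $X$ such that the restriction $f|_U$ is continuous. *)

From HB Require Import structures.
From mathcomp Require Import all_boot all_order all_algebra.
From mathcomp Require Import all_classical all_reals all_analysis.
Set Implicit Arguments. Unset Strict Implicit. Unset Printing Implicit Defensive.
Import Order.TTheory GRing.Theory Num.Theory numFieldNormedType.Exports.
Local Open Scope classical_set_scope.
Local Open Scope ring_scope.

Definition coz {X : topologicalType} {R : realType} (g : X -> R) : set X :=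
  [set x | g x != 0].

Definition cozero_set {X : topologicalType} (R : realType) (U : set X) : Prop :=
  exists g : X -> R, continuous g /\ U = coz g.

Definition Tpp (X : topologicalType) (R : realType) : set (X -> R) :=
  [set f | exists U : set X, [/\ cozero_set R U, dense U &
                                {within U, continuous f}]].
Arguments Tpp : clear implicits.

From HB Require Import structures.
From mathcomp Require Import all_boot all_order all_algebra.
From mathcomp Require Import all_classical all_reals all_analysis.
Import Order.TTheory GRing.Theory Num.Theory numFieldNormedType.Exports.
Local Open Scope classical_set_scope.
Local Open Scope ring_scope.

(* If f and g are continuous on the dense cozero sets coz a and coz b, both are
   continuous on coz (a * b) = coz a `&` coz b, which is again a dense cozero set
   because dense open sets meet in a dense set. *)

Section Tpp_ring.
Variables (X : topologicalType) (R : realType).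

Lemma cozero_set_open (U : set X) : cozero_set R U -> open U.
Proof.
case=> g [cg ->].
have -> : coz g = g @^-1` [set x : R | x != 0] by [].
by apply: open_comp => [x _|]; [exact: cg | exact: open_neq].
Qed.

Lemma cozero_setT : cozero_set R [set: X].
Proof.
exists (fun _ => 1); split; first by move=> x; exact: cvg_cst.
by apply/seteqP; split => x //= _; rewrite /coz /= oner_neq0.
Qed.

Lemma cozero_setI (U V : set X) :
  cozero_set R U -> cozero_set R V -> cozero_set R (U `&` V).
Proof.
case=> a [ca ->]; case=> b [cb ->].
exists (fun x => a x * b x); split.
  by move=> x; apply: continuousM; [exact: ca | exact: cb].
by apply/seteqP; split => x; rewrite /coz /= mulf_eq0 negb_or => /andP.
Qed.

Lemma dense_setT : dense [set: X].
Proof. by move=> O [x Ox] _; exists x. Qed.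

Lemma Tpp_continuous (f : X -> R) : continuous f -> Tpp X R f.
Proof.
move=> cf; exists setT; split; [exact: cozero_setT | exact: dense_setT |].
exact: continuous_subspaceT.
Qed.

Lemma Tpp_comp (h : R -> R) (f : X -> R) :
  continuous h -> Tpp X R f -> Tpp X R (h \o f).
Proof.
move=> ch [U [cU dU cf]]; exists U; split => // x.
exact: continuous_comp (cf x) (ch _).
Qed.

Lemma Tpp_common_domain {f g : X -> R} : Tpp X R f -> Tpp X R g ->
  exists U : set X, [/\ cozero_set R U, dense U,
    {within U, continuous f} & {within U, continuous g}].
Proof.
move=> [U [cU dU cf]] [V [cV dV cg]]; exists (U `&` V); split.
- exact: cozero_setI.
- by apply: denseI => //; exact: cozero_set_open cU.
- by apply: continuous_subspaceW cf; exact: subIsetl.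
- by apply: continuous_subspaceW cg; exact: subIsetr.
Qed.

Lemma within_continuousD (U : set X) (f g : X -> R) :
  {within U, continuous f} -> {within U, continuous g} ->
  {within U, continuous (fun x => f x + g x)}.
Proof.
move=> cf cg x.
exact: (@continuousD R R^o (subspace U) f g x (cf x) (cg x)).
Qed.

Lemma within_continuousM (U : set X) (f g : X -> R) :
  {within U, continuous f} -> {within U, continuous g} ->
  {within U, continuous (fun x => f x * g x)}.
Proof.
move=> cf cg x.
exact: (@continuousM R (subspace U) f g x (cf x) (cg x)).
Qed.

Lemma TppD (f g : X -> R) :
  Tpp X R f -> Tpp X R g -> Tpp X R (fun x => f x + g x).
Proof.
move=> Tf Tg; have [U [cU dU cf cg]] := Tpp_common_domain Tf Tg.
by exists U; split => //; exact: within_continuousD.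
Qed.

Lemma TppM (f g : X -> R) :
  Tpp X R f -> Tpp X R g -> Tpp X R (fun x => f x * g x).
Proof.
move=> Tf Tg; have [U [cU dU cf cg]] := Tpp_common_domain Tf Tg.
by exists U; split => //; exact: within_continuousM.
Qed.

End Tpp_ring.

Theorem theorem2p1 (X : topologicalType) (R : realType)
  (hT1 : @accessible_space X) :
  [/\ Tpp X R (fun _ => 0), Tpp X R (fun _ => 1),
      (forall f g, Tpp X R f -> Tpp X R g -> Tpp X R (fun x => f x + g x)),
      (forall f, Tpp X R f -> Tpp X R (fun x => - f x)) &
      (forall f g, Tpp X R f -> Tpp X R g -> Tpp X R (fun x => f x * g x))].
Proof.
split.
- exact/Tpp_continuous/cst_continuous.
- exact/Tpp_continuous/cst_continuous.
- exact: TppD.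
- by move=> f; apply: Tpp_comp; exact: opp_continuous.
- exact: TppM.
Qed.
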